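(* Let $\mathcal C$ be a subspace of $\mathcal H=\mathcal H_A\otimes\mathcal H_B$ with encoding isometry $\mathcal E:\mathcal L\to\mathcal C$ from a logical space $\mathcal L$ onto $\mathcal C$. Consider the following experiment: (1) a party chooses an arbitrary joint state of the logical system $\mathcal L$ and an auxiliary system $\mathrm{Aux}$ (of arbitrary finite dimension); (2) $\mathcal L$ is encoded with $\mathcal E$; (3) the party applies an arbitrary operation acting only on $\mathrm{Aux}$ and on the components in $\mathcal H_B$ of the encoding; (4) $\mathrm{Aux}$ is traced out. The set of possible resulting states of $\mathcal H$ (the corrupted codeword) is exactly $ST_B(\mathcal C)$.
   Context: A mixed state $\rho'$ is ''in'' $\mathcal C$ if $\mathrm{Tr}(P_{\mathcal C}\rho')=1$, where $P_{\mathcal C}$ is the projector onto $\mathcal C$. $ST_B(\mathcal C)=\{\rho:\exists\rho'\text{ in }\mathcal C,\ \mathrm{Tr}_B(\rho)=\mathrm{Tr}_B(\rho')\}$. *)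

From mathcomp Require Import all_boot all_order all_algebra.
From mathcomp Require Import algC.
From mathcomp Require Import mxtens.
Set Implicit Arguments. Unset Strict Implicit. Unset Printing Implicit Defensive.
Import Order.TTheory GRing.Theory Num.Theory.
Local Open Scope ring_scope.

(* Finite-dimensional Hilbert spaces C^n, with scalars algC (algebraic complex
   numbers, a numClosedFieldType with conjugation conjC).  A composite system
   X (x) Y of dimensions m, n is C^(m*n) indexed via mxtens_index, and the
   Kronecker product is mxtens's  A *t B. *)

Definition dagger {m n : nat} (M : 'M[algC]_(m, n)) : 'M[algC]_(n, m) :=
  (map_mx Num.conj M)^T.

Definition psd {n : nat} (M : 'M[algC]_n) : Prop :=
  forall v : 'cV[algC]_n, 0 <= (dagger v *m M *m v) 0 0.

Definition density {n : nat} (rho : 'M[algC]_n) : Prop :=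
  psd rho /\ \tr rho = 1.

Definition is_isometry {n k : nat} (V : 'M[algC]_(n, k)) : Prop :=
  dagger V *m V = 1%:M.

Definition ptrace2 {m n : nat} (X : 'M[algC]_(m * n)) : 'M[algC]_m :=
  \matrix_(i, j) \sum_(l < n) X (mxtens_index (i, l)) (mxtens_index (j, l)).

(* The code C = range E (E : L -> H_A (x) H_B an is_isometry); its projector is
   P_C = E E^dagger.  A state rho' is "in C" iff Tr(P_C rho') = 1. *)
Definition code_proj {n k : nat} (E : 'M[algC]_(n, k)) : 'M[algC]_n :=
  E *m dagger E.

Definition in_code {n k : nat} (E : 'M[algC]_(n, k)) (rho : 'M[algC]_n) : Prop :=
  density rho /\ \tr (code_proj E *m rho) = 1.

Definition ST_B {a b k : nat} (E : 'M[algC]_(a * b, k)) (rho : 'M[algC]_(a * b)) : Prop :=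
  density rho /\
  exists rho' : 'M[algC]_(a * b), in_code E rho' /\ ptrace2 rho = ptrace2 rho'.

(* quantum operation (CPTP map) given by Kraus operators K_0..K_{r-1} : C^q -> C^p *)
Definition kraus {p q r : nat} (K : 'I_r -> 'M[algC]_(p, q)) : Prop :=
  \sum_(i < r) dagger (K i) *m K i = 1%:M.

(* I_A (x) K, where K acts on H_B (x) Aux (input dim b*d, output dim b*d'),
   regarded as an operator (H_A (x) H_B) (x) Aux -> (H_A (x) H_B) (x) Aux'. *)
Definition lift_B {a b d d' : nat} (K : 'M[algC]_(b * d', b * d)) :
  'M[algC]_(a * b * d', a * b * d) :=
  castmx (mulnA a b d', mulnA a b d) ((1%:M : 'M[algC]_a) *t K).

Definition apply_kraus {p q r : nat} (K : 'I_r -> 'M[algC]_(p, q)) (X : 'M[algC]_q) :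
  'M[algC]_p := \sum_(i < r) K i *m X *m dagger (K i).

(* Outcomes of the experiment:
   (1) a joint state sigma of L (x) Aux, Aux of arbitrary finite dimension d;
   (2) encode L with E, i.e. apply E (x) I_Aux;
   (3) apply an arbitrary quantum operation (CPTP, Kraus form) acting only on
       H_B (x) Aux (output H_B (x) Aux', Aux' of arbitrary dimension d');
   (4) trace out the auxiliary system. *)
Definition experiment_outcome {a b k : nat} (E : 'M[algC]_(a * b, k))
  (rho : 'M[algC]_(a * b)) : Prop :=
  exists (d : nat) (sigma : 'M[algC]_(k * d)),
    density sigma /\
    exists (d' r : nat) (K : 'I_r -> 'M[algC]_(b * d', b * d)),
      kraus K /\
      let encoded := (E *t (1%:M : 'M[algC]_d)) *m sigma *m dagger (E *t (1%:M : 'M[algC]_d)) in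
      rho = ptrace2 (apply_kraus (fun i => lift_B (a := a) (K i)) encoded).

From mathcomp Require Import all_boot all_order all_algebra.
From mathcomp Require Import algC.
From mathcomp Require Import mxtens.
From mathcomp Require Import sesquilinear spectral.
From mathcomp Require Import ring.
Set Implicit Arguments. Unset Strict Implicit. Unset Printing Implicit Defensive.
Import Order.TTheory GRing.Theory Num.Theory.
Local Open Scope ring_scope.

(* Let the party's operation have Kraus operators K_i on H_B (x) Aux.  The partial
   trace over H_B (x) Aux is the adjoint of A |-> A (x) 1, which commutes with
   1 (x) K_i, so sum_i K_i^dagger K_i = 1 makes the channel invisible on H_A: every
   outcome has the H_A-marginal of the encoded state with Aux traced out, and that
   state lies in C.
   Conversely, write rho = F F^dagger and rho' = G G^dagger, with range G in C.
   Moving the H_B index of F and G into their column index turns them into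
   purifications F', G' of the common H_A-marginal, F' F'^dagger = G' G'^dagger.
   With the pseudo-inverse of this matrix, F' = G' Y0 where Y1 := 1 - Q (Q the
   projection onto the row space of G') satisfies G' Y1 = 0 and
   Y0 Y0^dagger + Y1 Y1^dagger = 1.  So encoding the vectorization of
   E^dagger G, with Aux a copy of H, and applying the channel with Kraus
   operators Y0^T, Y1^T on H_B (x) Aux produces the vectorization of F, whose
   Aux-marginal is rho. *)

Lemma daggerE m n (A : 'M[algC]_(m, n)) i j : dagger A i j = (A j i)^*.
Proof. by rewrite !mxE. Qed.

Lemma dagger_mul m n p (A : 'M[algC]_(m, n)) (B : 'M[algC]_(n, p)) :
  dagger (A *m B) = dagger B *m dagger A.
Proof. by rewrite /dagger map_mxM trmx_mul. Qed.

Lemma daggerK m n (A : 'M[algC]_(m, n)) : dagger (dagger A) = A.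
Proof. by apply/matrixP => i j; rewrite !daggerE conjCK. Qed.

Lemma dagger1 n : dagger (1%:M : 'M[algC]_n) = 1%:M.
Proof. by rewrite /dagger map_mx1 trmx1. Qed.

Lemma daggerD m n (A B : 'M[algC]_(m, n)) : dagger (A + B) = dagger A + dagger B.
Proof. by apply/matrixP => i j; rewrite !mxE rmorphD. Qed.

Lemma daggerB m n (A B : 'M[algC]_(m, n)) : dagger (A - B) = dagger A - dagger B.
Proof. by apply/matrixP => i j; rewrite !mxE rmorphB. Qed.

Lemma daggerZ m n c (A : 'M[algC]_(m, n)) : dagger (c *: A) = c^* *: dagger A.
Proof. by apply/matrixP => i j; rewrite !mxE rmorphM. Qed.

Lemma dagger_tens m n p q (A : 'M[algC]_(m, n)) (B : 'M[algC]_(p, q)) :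
  dagger (A *t B) = dagger A *t dagger B.
Proof. by rewrite /dagger map_mxT trmx_tens. Qed.

Lemma dagger_castmx m n m' n' (e : (m = m') * (n = n')) (A : 'M[algC]_(m, n)) :
  dagger (castmx e A) = castmx (e.2, e.1) (dagger A).
Proof. by apply/matrixP => i j; rewrite !(castmxE, mxE). Qed.

Lemma dagger_trmx_mul m n (A : 'M[algC]_(m, n)) : dagger A^T *m A^T = (A *m dagger A)^T.
Proof. by rewrite trmx_mul /dagger map_trmx !trmxK. Qed.

Lemma trmxC_dagger m n (A : 'M[algC]_(m, n)) : (A ^t* )%sesqui = dagger A.
Proof. by rewrite /dagger map_trmx. Qed.

Lemma dagger_diag n (d : 'rV[algC]_n) :
  (forall i, d 0 i \is Num.real) -> dagger (diag_mx d) = diag_mx d.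
Proof.
move=> d_real; apply/matrixP => i j; rewrite !mxE.
by case: eqVneq => [->|_]; rewrite ?mulr1n ?conj_Creal ?mulr0n ?conjC0.
Qed.

Lemma form_delta n (M : 'M[algC]_n) i j :
  dagger (delta_mx i 0 : 'cV_n) *m M *m delta_mx j 0 = (M i j)%:M.
Proof.
have -> : dagger (delta_mx i 0 : 'cV_n) = delta_mx 0 i.
  by apply/matrixP => k l; rewrite !mxE; case: (_ == _); case: (_ == _); rewrite ?conjC1 ?conjC0.
by apply/matrixP => ? ?; rewrite -rowE -colE !ord1 !mxE.
Qed.

Lemma form_dagger n (M : 'M[algC]_n) (v : 'cV[algC]_n) :
  dagger v *m dagger M *m v = dagger (dagger v *m M *m v).
Proof. by rewrite !dagger_mul daggerK mulmxA. Qed.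

(* Polarization, with the vectors e_i + c e_j for c = 1 and c = 'i. *)
Lemma form_eq0 n (N : 'M[algC]_n) :
  (forall v : 'cV_n, (dagger v *m N *m v) 0 0 = 0) -> N = 0.
Proof.
move=> N0; have Nii i : N i i = 0 by have := N0 (delta_mx i 0); rewrite form_delta mxE.
apply/matrixP => i j; rewrite mxE.
have polar c : c * N i j + c^* * N j i = 0.
  have := N0 (delta_mx i 0 + c *: delta_mx j 0).
  rewrite daggerD daggerZ !mulmxDl !mulmxDr -!scalemxAl -!scalemxAr.
  by rewrite !form_delta !Nii !mxE !mulr1n => <-; ring.
have := polar 1; have := polar 'i; rewrite conjC1 conjCi !mul1r => h2 h1.
have : 'i * (N i j *+ 2) = 0.
  transitivity ('i * (N i j + N j i) + ('i * N i j + - 'i * N j i)); first ring.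
  by rewrite h1 h2 mulr0 addr0.
by move/eqP; rewrite mulf_eq0 (negbTE (neq0Ci _)) mulrn_eq0 /= => /eqP.
Qed.

Lemma psd_hermitian n (M : 'M[algC]_n) : psd M -> dagger M = M.
Proof.
move=> psdM; apply/eqP; rewrite -subr_eq0; apply/eqP; apply: form_eq0 => v.
rewrite mulmxBr mulmxBl form_dagger; set q := dagger v *m M *m v.
by rewrite mxE daggerE [(- q) 0 0]mxE conj_Creal ?subrr // ger0_real ?psdM.
Qed.

Lemma psd1 n : psd (1%:M : 'M[algC]_n).
Proof.
move=> v; rewrite mulmx1 mxE; apply: sumr_ge0 => i _.
by rewrite daggerE mulrC mul_conjC_ge0.
Qed.

Lemma psd_conj m n (V : 'M[algC]_(m, n)) (M : 'M[algC]_n) :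
  psd M -> psd (V *m M *m dagger V).
Proof. by move=> psdM v; have := psdM (dagger V *m v); rewrite dagger_mul daggerK !mulmxA. Qed.

Lemma psd_gram m n (A : 'M[algC]_(m, n)) : psd (A *m dagger A).
Proof. by rewrite -[A in A *m _]mulmx1; apply/psd_conj/psd1. Qed.

Lemma psd_sum n I (r : seq I) (F : I -> 'M[algC]_n) :
  (forall i, psd (F i)) -> psd (\sum_(i <- r) F i).
Proof.
move=> psdF; apply: big_ind => // [v|A B psdA psdB v]; first by rewrite mulmx0 mul0mx mxE.
by rewrite mulmxDr mulmxDl mxE addr_ge0.
Qed.

Lemma psd_spectral n (M : 'M[algC]_n) : psd M ->
  exists U : 'M[algC]_n, exists2 d : 'rV[algC]_n,
    dagger U *m U = 1%:M /\ (forall i, 0 <= d 0 i) & M = U *m diag_mx d *m dagger U.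
Proof.
move=> psdM; have normalM : M \is normalmx.
  by apply/normalmxP; rewrite trmxC_dagger psd_hermitian.
have /unitarymxP := spectral_unitarymx M; rewrite trmxC_dagger => PPt.
have := orthomx_spectralP normalM; rewrite invmx_unitary ?spectral_unitarymx //.
rewrite trmxC_dagger; set P := spectralmx M; set d := spectral_diag M => defM.
exists (dagger P), d; last by rewrite daggerK.
split; first by rewrite daggerK.
have PMP : P *m M *m dagger P = diag_mx d.
  by rewrite defM !mulmxA PPt mul1mx -mulmxA PPt mulmx1.
by move=> i; have := psd_conj P psdM (delta_mx i 0); rewrite PMP form_delta !mxE eqxx mulr1n.
Qed.

Lemma psd_factor n (M : 'M[algC]_n) : psd M -> exists F : 'M[algC]_n, M = F *m dagger F.
Proof.
move=> /psd_spectral [U [d [_ d_ge0] ->]].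
pose s : 'rV[algC]_n := \row_i sqrtC (d 0 i).
have s_real i : s 0 i \is Num.real by rewrite mxE ger0_real ?sqrtC_ge0.
exists (U *m diag_mx s); rewrite dagger_mul dagger_diag // !mulmxA -(mulmxA U (diag_mx s)).
by rewrite mulmx_diag; congr (_ *m diag_mx _ *m _); apply/rowP => i; rewrite !mxE -expr2 sqrtCK.
Qed.

(* Inverting the eigenvalues gives the pseudo-inverse because [0^-1 = 0]. *)
Lemma psd_pinv n (X : 'M[algC]_n) :
  psd X -> exists2 Y : 'M[algC]_n, dagger Y = Y & X *m Y *m X = X.
Proof.
move=> /psd_spectral [U [d [UU d_ge0] defX]].
pose w : 'rV[algC]_n := \row_i (d 0 i)^-1.
exists (U *m diag_mx w *m dagger U).
  rewrite !dagger_mul daggerK dagger_diag ?mulmxA // => i.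
  by rewrite mxE rpredV ger0_real.
have dwd : diag_mx d *m diag_mx w *m diag_mx d = diag_mx d.
  rewrite !mulmx_diag; congr diag_mx; apply/rowP => i; rewrite !mxE.
  by have [->|d_neq0] := eqVneq (d 0 i) 0; rewrite ?mul0r // mulfV ?mul1r.
rewrite defX !mulmxA -(mulmxA _ (dagger U)) UU mulmx1 -(mulmxA _ (dagger U)) UU mulmx1.
by rewrite -(mulmxA U) -(mulmxA U) dwd.
Qed.

Lemma gram_eq0 m n (A : 'M[algC]_(m, n)) : \tr (A *m dagger A) = 0 -> A = 0.
Proof.
have term_ge0 i l : 0 <= A i l * dagger A l i by rewrite daggerE mul_conjC_ge0.
move=> trA0; apply/matrixP => i j; rewrite mxE.
have AAii0 : (A *m dagger A) i i = 0.
  by apply: (psumr_eq0P _ trA0) => // k _; rewrite mxE sumr_ge0.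
rewrite mxE in AAii0; apply/eqP; rewrite -mul_conjC_eq0 -daggerE; apply/eqP.
exact: (psumr_eq0P _ AAii0).
Qed.

Lemma mulmx_gram_eq0 m n p (T : 'M[algC]_(p, m)) (A : 'M[algC]_(m, n)) :
  T *m (A *m dagger A) = 0 -> T *m A = 0.
Proof.
by move=> TA0; apply: gram_eq0; rewrite dagger_mul mulmxA -(mulmxA T) TA0 mul0mx mxtrace0.
Qed.

Lemma eq_gram_kraus_pair m n (F G : 'M[algC]_(m, n)) :
  F *m dagger F = G *m dagger G ->
  exists Y0 Y1 : 'M[algC]_n,
    [/\ G *m Y0 = F, G *m Y1 = 0 & Y0 *m dagger Y0 + Y1 *m dagger Y1 = 1%:M].
Proof.
move=> eqFG; have [Xp Xp_herm XXpX] := psd_pinv (psd_gram G).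
set X := G *m dagger G in eqFG XXpX.
have XXp_id (H : 'M_(m, n)) : H *m dagger H = X -> X *m Xp *m H = H.
  move=> defX; apply/eqP; rewrite -subr_eq0 -{2}[H]mul1mx -mulmxBl; apply/eqP.
  by apply: mulmx_gram_eq0; rewrite defX mulmxBl mul1mx XXpX subrr.
pose Q := dagger G *m Xp *m G.
have GQ : G *m Q = G by rewrite /Q !mulmxA XXp_id.
have Q_herm : dagger Q = Q by rewrite /Q !dagger_mul daggerK Xp_herm mulmxA.
have QQ : Q *m Q = Q by rewrite {1}/Q -mulmxA GQ.
exists (dagger G *m Xp *m F), (1%:M - Q); split.
- by rewrite !mulmxA XXp_id.
- by rewrite mulmxBr mulmx1 GQ subrr.
have -> : dagger G *m Xp *m F *m dagger (dagger G *m Xp *m F) = Q *m dagger Q.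
  by rewrite !dagger_mul -!mulmxA (mulmxA F) eqFG !mulmxA.
rewrite daggerB dagger1 Q_herm QQ mulmxBl mul1mx mulmxBr mulmx1 QQ subrr subr0.
by rewrite addrC subrK.
Qed.

Lemma tensmx11 (R : pzRingType) m n : (1%:M : 'M[R]_m) *t (1%:M : 'M[R]_n) = 1%:M.
Proof.
apply/matrixP => k l; case: (mxtens_indexP k) => i j; case: (mxtens_indexP l) => i' j'.
rewrite tensmxE !mxE (inj_eq (can_inj (@mxtens_indexK m n))) xpair_eqE.
by case: (i == i'); case: (j == j'); rewrite ?mulr1 ?mulr0.
Qed.

Lemma tensmx_sumr (R : pzRingType) m n p q I (r : seq I) (A : 'M[R]_(m, n))
    (F : I -> 'M[R]_(p, q)) :
  A *t (\sum_(i <- r) F i) = \sum_(i <- r) A *t F i.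
Proof.
apply: (big_morph (tensmx A)) => [B C|]; last exact: tensmx0.
by apply/matrixP => i j; rewrite !mxE mulrDr.
Qed.

Lemma castmx_sum (V : nmodType) m n m' n' (e : (m = m') * (n = n')) I (r : seq I)
    (F : I -> 'M[V]_(m, n)) :
  castmx e (\sum_(i <- r) F i) = \sum_(i <- r) castmx e (F i).
Proof.
by apply/matrixP => i j; rewrite castmxE !summxE; apply: eq_bigr => l _; rewrite castmxE.
Qed.

Lemma castmx_mulmx (R : pzSemiRingType) p q r p' q' r' (e1 : p = p') (e2 : q = q')
    (e3 : r = r') (A : 'M[R]_(p, q)) (B : 'M[R]_(q, r)) :
  castmx (e1, e2) A *m castmx (e2, e3) B = castmx (e1, e3) (A *m B).
Proof. by case: p' / e1; case: q' / e2; case: r' / e3; rewrite !castmx_id. Qed.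

Lemma sum_mxtens_index (V : nmodType) m n (F : 'I_(m * n) -> V) :
  \sum_k F k = \sum_i \sum_j F (mxtens_index (i, j)).
Proof.
rewrite pair_big /= (reindex (@mxtens_unindex m n)) /=; last first.
  by exists (@mxtens_index m n) => k _; rewrite (mxtens_indexK, mxtens_unindexK).
by apply: eq_bigr => k _; rewrite mxtens_unindexK.
Qed.

Lemma mxtens_indexA a b c (x : 'I_a) (y : 'I_b) (z : 'I_c) :
  cast_ord (esym (mulnA a b c)) (mxtens_index (mxtens_index (x, y), z)) =
  mxtens_index (x, mxtens_index (y, z)).
Proof. by apply: val_inj => /=; rewrite mulnDl -mulnA addnA. Qed.

Lemma mxtrace_delta_mul (R : pzRingType) n (i j : 'I_n) (M : 'M[R]_n) :
  \tr (delta_mx i j *m M) = M j i.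
Proof.
rewrite /mxtrace (bigD1 i) //= big1 ?addr0 => [|k /negbTE k_neq_i].
  rewrite mxE (bigD1 j) //= big1 ?addr0 => [|l /negbTE l_neq_j]; rewrite !mxE ?eqxx ?mul1r //.
  by rewrite l_neq_j andbF mul0r.
by rewrite mxE big1 // => l _; rewrite mxE k_neq_i mul0r.
Qed.

Lemma mxtrace_mul_ptrace2 m n (A : 'M[algC]_m) (X : 'M[algC]_(m * n)) :
  \tr (A *m ptrace2 X) = \tr ((A *t 1%:M) *m X).
Proof.
rewrite /mxtrace sum_mxtens_index; apply: eq_bigr => i _.
rewrite mxE; under eq_bigr do rewrite mxE mulr_sumr.
rewrite exchange_big /=; apply: eq_bigr => l _.
rewrite mxE sum_mxtens_index; apply: eq_bigr => j _.
rewrite (bigD1 l) //= big1 ?addr0 => [|l' /negbTE l'_neq_l]; rewrite tensmxE mxE.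
  by rewrite eqxx mulr1.
by rewrite eq_sym l'_neq_l mulr0 mul0r.
Qed.

Lemma mxtrace_ptrace2 m n (X : 'M[algC]_(m * n)) : \tr (ptrace2 X) = \tr X.
Proof. by rewrite -[ptrace2 X]mul1mx mxtrace_mul_ptrace2 tensmx11 mul1mx. Qed.

(* The partial trace is the adjoint of [A |-> A *t 1], hence determined by it. *)
Lemma eq_ptrace2 m n n' (X : 'M[algC]_(m * n)) (Y : 'M[algC]_(m * n')) :
  (forall A, \tr ((A *t 1%:M) *m X) = \tr ((A *t 1%:M) *m Y)) -> ptrace2 X = ptrace2 Y.
Proof.
by move=> eqXY; apply/matrixP => i j; rewrite -!(mxtrace_delta_mul j i) !mxtrace_mul_ptrace2.
Qed.

Lemma ptrace2_kraus_tens m n n' r (K : 'I_r -> 'M[algC]_(n', n)) (X : 'M[algC]_(m * n)) :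
  kraus K -> ptrace2 (apply_kraus (fun i => 1%:M *t K i) X) = ptrace2 X.
Proof.
move=> krausK; apply: eq_ptrace2 => A; rewrite -[in RHS]krausK tensmx_sumr.
rewrite /apply_kraus mulmx_sumr mulmx_suml !raddf_sum; apply: eq_bigr => i _ /=.
rewrite !mulmxA mxtrace_mulC !mulmxA dagger_tens dagger1 !tensmx_mul.
by rewrite !mul1mx !mulmx1.
Qed.

Definition regroup m n k (F : 'M[algC]_(m * n, k)) : 'M[algC]_(m, n * k) :=
  \matrix_(x, w) F (mxtens_index (x, (mxtens_unindex w).1)) (mxtens_unindex w).2.

Lemma regroupE m n k (F : 'M[algC]_(m * n, k)) x y j :
  regroup F x (mxtens_index (y, j)) = F (mxtens_index (x, y)) j.
Proof. by rewrite mxE mxtens_indexK. Qed.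

Lemma ptrace2_gram m n k (F : 'M[algC]_(m * n, k)) :
  ptrace2 (F *m dagger F) = regroup F *m dagger (regroup F).
Proof.
apply/matrixP => x x'; rewrite !mxE sum_mxtens_index; apply: eq_bigr => y _.
by rewrite mxE; apply: eq_bigr => j _; rewrite !daggerE !regroupE.
Qed.

Lemma psd_ptrace2 m n (X : 'M[algC]_(m * n)) : psd X -> psd (ptrace2 X).
Proof. by move=> /psd_factor [F ->]; rewrite ptrace2_gram; apply: psd_gram. Qed.

Lemma ptrace2_castmxA a b c (X : 'M[algC]_(a * (b * c))) :
  ptrace2 (ptrace2 (castmx (mulnA a b c, mulnA a b c) X)) = ptrace2 X.
Proof.
apply/matrixP => x x'; rewrite !mxE sum_mxtens_index; apply: eq_bigr => y _.
by rewrite mxE; apply: eq_bigr => z _; rewrite castmxE !mxtens_indexA.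
Qed.

Lemma ptrace2_kraus_lift a b d d' r (K : 'I_r -> 'M[algC]_(b * d', b * d))
    (M : 'M[algC]_(a * b * d)) :
  kraus K -> ptrace2 (ptrace2 (apply_kraus (fun i => lift_B (a := a) (K i)) M)) =
             ptrace2 (ptrace2 M).
Proof.
move=> krausK; rewrite -[M](castmxKV (mulnA a b d) (mulnA a b d)).
set X := castmx _ M; rewrite ptrace2_castmxA -(ptrace2_kraus_tens _ krausK) -ptrace2_castmxA.
congr (ptrace2 (ptrace2 _)); rewrite /apply_kraus castmx_sum; apply: eq_bigr => i _.
by rewrite /lift_B dagger_castmx /= !castmx_mulmx.
Qed.

Definition mxcvec m n (H : 'M[algC]_(m, n)) : 'cV[algC]_(m * n) :=
  \col_k H (mxtens_unindex k).1 (mxtens_unindex k).2.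

Lemma mxcvecE m n (H : 'M[algC]_(m, n)) i j : mxcvec H (mxtens_index (i, j)) 0 = H i j.
Proof. by rewrite mxE mxtens_indexK. Qed.

Lemma mxcvec0 m n : mxcvec (0 : 'M[algC]_(m, n)) = 0.
Proof. by apply/matrixP => k l; rewrite !mxE. Qed.

Lemma tensmx_mul_mxcvec m m' n n' (A : 'M[algC]_(m, m')) (B : 'M[algC]_(n, n'))
    (H : 'M[algC]_(m', n')) :
  (A *t B) *m mxcvec H = mxcvec (A *m H *m B^T).
Proof.
apply/matrixP => k z; rewrite ord1; case: (mxtens_indexP k) => i j.
rewrite mxcvecE !mxE sum_mxtens_index; under [RHS]eq_bigr do rewrite !mxE mulr_suml.
rewrite [RHS]exchange_big; apply: eq_bigr => p _; apply: eq_bigr => l _.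
by rewrite tensmxE mxcvecE mulrAC.
Qed.

Lemma ptrace2_mxcvec m n (H : 'M[algC]_(m, n)) :
  ptrace2 (mxcvec H *m dagger (mxcvec H)) = H *m dagger H.
Proof.
apply/matrixP => i j; rewrite !mxE; apply: eq_bigr => l _.
by rewrite mxE big_ord1 !daggerE !mxcvecE.
Qed.

Lemma mxcvec_regroup a b c (F : 'M[algC]_(a * b, c)) :
  castmx (mulnA a b c, erefl 1%N) (mxcvec (regroup F)) = mxcvec F.
Proof.
apply/matrixP => k z; rewrite ord1; case: (mxtens_indexP k) => w j.
case: (mxtens_indexP w) => x y; by rewrite castmxE mxtens_indexA cast_ord_id !mxcvecE regroupE.
Qed.

Lemma lift_B_mul_mxcvec a b d d' (K : 'M[algC]_(b * d', b * d)) (G : 'M[algC]_(a * b, d)) :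
  lift_B K *m mxcvec G = castmx (mulnA a b d', erefl 1%N) (mxcvec (regroup G *m K^T)).
Proof. by rewrite /lift_B -mxcvec_regroup castmx_mulmx tensmx_mul_mxcvec mul1mx. Qed.

Lemma isometry_tens1 n k d (E : 'M[algC]_(n, k)) :
  is_isometry E -> is_isometry (E *t (1%:M : 'M[algC]_d)).
Proof. by rewrite /is_isometry dagger_tens tensmx_mul => ->; rewrite dagger1 mulmx1 tensmx11. Qed.

Lemma code_proj_tens1 n k d (E : 'M[algC]_(n, k)) :
  code_proj (E *t (1%:M : 'M[algC]_d)) = code_proj E *t 1%:M.
Proof. by rewrite /code_proj dagger_tens tensmx_mul dagger1 mulmx1. Qed.

Lemma code_proj_isometry n k (V : 'M[algC]_(n, k)) : is_isometry V -> code_proj V *m V = V.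
Proof. by rewrite /code_proj -mulmxA => ->; rewrite mulmx1. Qed.

Lemma mxtrace_isometry_conj n k (V : 'M[algC]_(n, k)) (S : 'M[algC]_k) :
  is_isometry V -> \tr (V *m S *m dagger V) = \tr S.
Proof. by move=> isoV; rewrite mxtrace_mulC mulmxA isoV mul1mx. Qed.

Lemma in_code_factor n k m (E : 'M[algC]_(n, k)) (G : 'M[algC]_(n, m)) :
  is_isometry E -> \tr (code_proj E *m (G *m dagger G)) = \tr (G *m dagger G) ->
  code_proj E *m G = G.
Proof.
move=> isoE trPG; set P := code_proj E in trPG *.
have P_herm : dagger P = P by rewrite /P /code_proj dagger_mul daggerK.
have PP : P *m P = P by rewrite /P /code_proj mulmxA -(mulmxA E) isoE mulmx1.
have sqr_Pc : (P - 1%:M) *m (P - 1%:M) = 1%:M - P.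
  by rewrite mulmxBl !mulmxBr PP !mulmx1 subrr mul1mx sub0r opprB.
apply/eqP; rewrite -subr_eq0 -{2}[G]mul1mx -mulmxBl; apply/eqP; apply: gram_eq0.
rewrite dagger_mul daggerB dagger1 P_herm mulmxA mxtrace_mulC !mulmxA sqr_Pc -mulmxA.
by rewrite mulmxBl mul1mx raddfB /= trPG subrr.
Qed.

Lemma experiment_outcome_ST_B a b k (E : 'M[algC]_(a * b, k)) (rho : 'M[algC]_(a * b)) :
  is_isometry E -> experiment_outcome E rho -> ST_B E rho.
Proof.
move=> isoE [d [sigma [[psd_sigma tr_sigma] [d' [r [K [krausK ->]]]]]]] /=.
set V := E *t 1%:M; set enc := V *m sigma *m dagger V.
have isoV : is_isometry V by apply: isometry_tens1.
have eqB := ptrace2_kraus_lift (a := a) enc krausK.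
have tr_enc : \tr enc = 1 by rewrite mxtrace_isometry_conj.
split.
  split; first by apply: psd_ptrace2; apply: psd_sum => i; do 2!apply: psd_conj.
  by rewrite -mxtrace_ptrace2 eqB !mxtrace_ptrace2.
exists (ptrace2 enc); split; last exact: eqB.
split; first by split; [apply: psd_ptrace2; apply: psd_conj | rewrite mxtrace_ptrace2].
by rewrite mxtrace_mul_ptrace2 -code_proj_tens1 /enc !mulmxA code_proj_isometry.
Qed.

Lemma ST_B_experiment_outcome a b k (E : 'M[algC]_(a * b, k)) (rho : 'M[algC]_(a * b)) :
  is_isometry E -> ST_B E rho -> experiment_outcome E rho.
Proof.
move=> isoE [[psd_rho _] [rho' [[[psd_rho' tr_rho'] tr_P_rho'] eqB]]].
have [F defF] := psd_factor psd_rho; have [G defG] := psd_factor psd_rho'.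
have PG : code_proj E *m G = G by apply: in_code_factor; rewrite // -defG tr_P_rho'.
have eqFG : regroup F *m dagger (regroup F) = regroup G *m dagger (regroup G).
  by rewrite -!ptrace2_gram -defF -defG eqB.
have [Y0 [Y1 [GY0 GY1 krausY]]] := eq_gram_kraus_pair eqFG.
pose t := mxcvec (dagger E *m G).
exists (a * b)%N, (t *m dagger t); split.
  split; first exact: psd_gram.
  rewrite -mxtrace_ptrace2 ptrace2_mxcvec dagger_mul daggerK !mulmxA mxtrace_mulC !mulmxA.
  by rewrite -mulmxA -defG.
exists (a * b)%N, 2, (fun i : 'I_2 => if i == ord0 then Y0^T else Y1^T); split.
  by rewrite /kraus !big_ord_recl big_ord0 addr0 /= !dagger_trmx_mul -raddfD /= krausY trmx1.
have Et : (E *t 1%:M) *m t = mxcvec G by rewrite tensmx_mul_mxcvec trmx1 mulmx1 mulmxA PG.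
have conj_rank1 m n (L : 'M[algC]_(m, n)) (v : 'cV_n) :
    L *m (v *m dagger v) *m dagger L = (L *m v) *m dagger (L *m v).
  by rewrite dagger_mul !mulmxA.
rewrite /= conj_rank1 Et /apply_kraus !big_ord_recl big_ord0 addr0 /= !conj_rank1.
rewrite !lift_B_mul_mxcvec !trmxK GY0 GY1 mxcvec_regroup mxcvec0 castmx_const.
by rewrite mul0mx addr0 ptrace2_mxcvec defF.
Qed.

Theorem mainTheorem11 (a b k : nat) (E : 'M[algC]_(a * b, k)) :
  is_isometry E ->
  forall rho : 'M[algC]_(a * b), experiment_outcome E rho <-> ST_B E rho.
Proof.
move=> isoE rho; split; [exact: experiment_outcome_ST_B | exact: ST_B_experiment_outcome].
Qed.
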